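(* Let $\mathcal C,\mathcal D\subseteq\{0,1\}^n$ be neural codes and $q:\mathcal C\to\mathcal D$ a code map, with pullback ring homomorphism $\phi_q:R_\mathcal D\to R_\mathcal C$, $\phi_q(f)=f\circ q$. Then $\phi_q$ is an $R[n]$-module homomorphism if and only if $q$ is an inclusion map, i.e. $q(c)=c$ for all $c\in\mathcal C$ (so $\mathcal C\subseteq\mathcal D$); and $\phi_q$ is an $R[n]$-module isomorphism if and only if $\mathcal C=\mathcal D$ and $q$ is the identity.
   Context: For a code $\mathcal C\subseteq\{0,1\}^n$, $R_\mathcal C$ is the ring of all functions $\mathcal C\to\mathbb F_2$ (equivalently $\mathbb F_2[x_1,\dots,x_n]$ modulo the ideal of polynomials vanishing on $\mathcal C$). $R[n]=\mathbb F_2[x_1,\dots,x_n]/\langle x_i^2-x_i: i\in[n]\rangle$, and $R_\mathcal C$ is an $R[n]$-module via $(r\cdot f)(c)=r(c)f(c)$ for $c\in\mathcal C$. A code map is any function $q:\mathcal C\to\mathcal D$. *)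

From HB Require Import structures.
From mathcomp Require Import all_boot all_algebra.
From mathcomp Require Import mpoly.
Set Implicit Arguments. Unset Strict Implicit. Unset Printing Implicit Defensive.
Import GRing.Theory.
Local Open Scope ring_scope.

Definition word (n : nat) := {ffun 'I_n -> bool}.
Definition code (n : nat) := {set word n}.

Definition elts n (C : code n) := {c : word n | c \in C}.

Definition RC n (C : code n) := elts C -> 'F_2.

Definition RC_add n (C : code n) (f g : RC C) : RC C := fun c => f c + g c.
Definition RC_mul n (C : code n) (f g : RC C) : RC C := fun c => f c * g c.

Definition pt n (c : word n) : 'I_n -> 'F_2 := fun i => (c i)%:R.

(* R[n] = F_2[x_1..x_n]/<x_i^2 - x_i>.  Elements of R[n] are represented by
   polynomials in {mpoly 'F_2[n]}; the action on R_C is by evaluation at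
   codewords, which is well defined on the quotient since every x_i^2 - x_i
   vanishes on {0,1}^n. *)
Definition Rn_act n (C : code n) (r : {mpoly 'F_2[n]}) (f : RC C) : RC C :=
  fun c => r.@[pt (val c)] * f c.

Definition pullback n (C D : code n) (q : elts C -> elts D) (f : RC D) : RC C :=
  fun c => f (q c).

Definition Rn_module_hom n (C D : code n) (phi : RC D -> RC C) : Prop :=
  (forall f g, phi (RC_add f g) = RC_add (phi f) (phi g)) /\
  (forall (r : {mpoly 'F_2[n]}) f, phi (Rn_act r f) = Rn_act r (phi f)).

Definition Rn_module_iso n (C D : code n) (phi : RC D -> RC C) : Prop :=
  Rn_module_hom phi /\ bijective phi.

(** The action of the coordinate function [x_i] on the constant function [1]
    recovers the [i]-th bit of a codeword, so an [R[n]]-linear pullback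
    [f |-> f \o q] forces [q c] and [c] to have the same bits.  If moreover
    the pullback is injective, then [q] is onto (otherwise the indicator of a
    point outside the image would pull back to [0]), so the inclusion
    [C ⊆ D] is an equality. *)

From mathcomp Require Import all_boot all_algebra.
From mathcomp Require Import mpoly.
From Stdlib Require Import Classical FunctionalExtensionality.
Import GRing.Theory.
Local Open Scope ring_scope.

Lemma meval_X_pt n (c : word n) (i : 'I_n) :
  ('X_i : {mpoly 'F_2[n]}).@[pt c] = (c i)%:R.
Proof. by rewrite mevalXU. Qed.

Lemma nat_of_bool_F2_inj : injective (fun b : bool => (b%:R : 'F_2)).
Proof. by case=> [] [] // /eqP; rewrite ?oner_eq0 // eq_sym oner_eq0. Qed.

Lemma pullback_Rn_module_homP n (C D : code n) (q : elts C -> elts D) :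
  Rn_module_hom (pullback q) <-> (forall c : elts C, val (q c) = val c).
Proof.
split.
- move=> [_ act_q] c; apply/ffunP => i; apply: nat_of_bool_F2_inj.
  have := congr1 (fun f => f c) (act_q 'X_i (fun _ => 1)).
  by rewrite /pullback /Rn_act /= !meval_X_pt !mulr1.
- move=> q_incl; split=> // r f.
  by apply: functional_extensionality => c; rewrite /pullback /Rn_act q_incl.
Qed.

Lemma pullback_inj_surjective (A : Type) (B : eqType) (q : A -> B) :
  injective (fun f : B -> 'F_2 => f \o q) -> forall b, exists a, q a = b.
Proof.
move=> inj_q b; apply: NNPP => not_im.
pose delta_b (e : B) : 'F_2 := (e == b)%:R.
have delta_bq : delta_b \o q = (fun _ => 0) \o q.
  apply: functional_extensionality => a /=; rewrite /delta_b.
  by case: eqP => // qa_b; case: not_im; exists a.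
by have /eqP := congr1 (@^~ b) (inj_q _ _ delta_bq); rewrite /delta_b eqxx oner_eq0.
Qed.

Lemma pullback_bij (A B : Type) (q : A -> B) :
  bijective q -> bijective (fun f : B -> 'F_2 => f \o q).
Proof.
case=> g qK gK; exists (fun f => f \o g) => f;
  by apply: functional_extensionality => x /=; rewrite ?qK ?gK.
Qed.

Lemma code_incl_eq n (C D : code n) (q : elts C -> elts D) :
  (forall c : elts C, val (q c) = val c) -> (forall d, exists c, q c = d) ->
  C = D.
Proof.
move=> q_incl q_onto; apply/setP => x; apply/idP/idP => [xC | xD].
- by rewrite -[x]/(val (exist _ x xC)) -q_incl (valP (q _)).
- have [c qc] := q_onto (exist _ x xD).
  by rewrite -[x]/(val (exist (fun y => y \in D) x xD)) -qc q_incl (valP c).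
Qed.

Lemma code_incl_bij n (C D : code n) (q : elts C -> elts D) :
  C = D -> (forall c : elts C, val (q c) = val c) -> bijective q.
Proof.
move=> CD q_incl; have DC (d : elts D) : val d \in C by rewrite CD; exact: (valP d).
by exists (fun d => exist _ (val d) (DC d)) => x; apply: val_inj; rewrite /= ?q_incl.
Qed.

Theorem lemma4 (n : nat) (C D : code n) (q : elts C -> elts D) :
  (Rn_module_hom (pullback q) <-> (forall c : elts C, val (q c) = val c)) /\
  (Rn_module_iso (pullback q) <->
     (C = D /\ forall c : elts C, val (q c) = val c)).
Proof.
split; first exact: pullback_Rn_module_homP.
split.
- move=> [/pullback_Rn_module_homP q_incl /bij_inj/pullback_inj_surjective q_onto].
  by split=> //; exact: code_incl_eq q_incl q_onto.
- move=> [CD q_incl]; split; first exact/pullback_Rn_module_homP.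
  exact/pullback_bij/code_incl_bij.
Qed.
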